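(* Let $J_-,J_+\subset\mathbb Z$ be disjoint finite arithmetic progressions with the same common difference, $J=J_-\cup J_+$. For a generic twisted $J$-corrugated $n$-gon with corresponding operator $\mathcal D\in\mathrm{DO}_n(J)$, the Lax operator $\mathcal L(z):=\mathcal D_-(z)^{-1}\mathcal D_+(z)$ is a well-defined element of $\widetilde{\mathrm{GL}}_n/(\mathrm{Ad}\,\mathbb T\times\mathbb R^* )$, i.e. it does not depend, modulo conjugation by constant invertible diagonal matrices and the substitutions $z\mapsto tz$ ($t\in\mathbb R^*$), on the choice of $\mathcal D$ corresponding to the polygon nor on the representative of the projective equivalence class.
   Context: A scalar operator is a bi-infinite real sequence $a=(a_i)$ acting by $(aV)_i=a_iV_i$; $T$ is the left shift. An $n$-periodic difference operator is a finite sum $\sum_j a^{(j)}T^j$ with $n$-periodic coefficients; $\mathrm{DO}_n(J)$ consists of those of the form $\sum_{j\in J}a^{(j)}T^j$; for $\mathcal D=\sum_{j\in J}a^{(j)}T^j$ put $\mathcal D_\pm=\sum_{j\in J_\pm}a^{(j)}T^j$. $\mathcal D(z)$ is the matrix Laurent polynomial obtained by sending a scalar operator $a$ to $\mathrm{diag}(a_1,\dots,a_n)$ and $T$ to the $n\times n$ matrix with $1$'s at positions $(i,i+1)$ and $z$ at position $(n,1)$. $\widetilde{\mathrm{GL}}_n$ is the group of invertible matrix-valued rational functions of $z$. For $d=\max J-\min J-1$, a twisted $J$-corrugated $n$-gon is a sequence $v_i\in\mathbb{RP}^d$ with $v_{i+n}=M(v_i)$ ($M$ projective) such that for each $i$ the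 points $v_{i+j}$, $j\in J$, lie in a projective subspace of dimension $|J|-2$; $\mathcal D$ corresponds to it if $\mathcal DV=0$ for some lift $V_i\in\mathbb R^{d+1}$ of $v_i$. Such $\mathcal D$ is determined up to $\mathcal D\mapsto a\mathcal Db^{-1}$ with $a,b$ invertible $n$-quasiperiodic scalar operators with the same monodromy. *)

From HB Require Import structures.
From mathcomp Require Import all_boot all_order all_algebra.
Set Implicit Arguments. Unset Strict Implicit. Unset Printing Implicit Defensive.
Import Order.TTheory GRing.Theory Num.Theory.
Local Open Scope ring_scope.

Notation RatF R := {fraction {poly R}}.

Definition cstF (R : realFieldType) (c : R) : RatF R := @FracField.tofrac _ (c%:P).
Definition zF (R : realFieldType) : RatF R := @FracField.tofrac _ 'X.

Definition arith_prog (s k : int) (len : nat) : seq int :=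
  [seq s + k * (i%:Z) | i <- iota 0 len].

Definition periodic (R : realFieldType) (n : nat) (a : int -> R) : Prop :=
  forall i : int, a (i + n%:Z) = a i.
Definition quasiperiodic (R : realFieldType) (n : nat) (m : R) (a : int -> R) : Prop :=
  forall i : int, a (i + n%:Z) = m * a i.
Definition scalar_invertible (R : realFieldType) (a : int -> R) : Prop :=
  forall i : int, a i != 0.

(* A difference operator in DO_n(J) is given by its coefficient sequences
   c j (for j in J), each n-periodic:  D = sum_{j in J} (c j) T^j. *)
Definition DO_coeffs (R : realFieldType) (n : nat) (c : int -> int -> R) : Prop :=
  forall j, periodic n (c j).

Definition DOact (R : realFieldType) (J : seq int) (c : int -> int -> R)
  (V : int -> R) : int -> R :=
  fun i => \sum_(j <- J) c j i * V (i + j).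

(* The matrix of T: 1's at (i,i+1), z at (n,1) (1-indexed); here 0-indexed. *)
Definition Tmat (R : realFieldType) (n : nat) (z : RatF R) : 'M[RatF R]_n :=
  \matrix_(i < n, j < n)
    (if (j : nat) == (i : nat).+1 then 1
     else if ((i : nat) == n.-1) && ((j : nat) == 0%N) then z else 0).

Definition Tpow (R : realFieldType) (n : nat) (z : RatF R) (j : int) : 'M[RatF R]_n :=
  match j with
  | Posz k => (Tmat n z) ^+ k
  | Negz k => (invmx (Tmat n z)) ^+ k.+1
  end.

Definition scal_mat (R : realFieldType) (n : nat) (a : int -> R) : 'M[RatF R]_n :=
  diag_mx (\row_(i < n) cstF (a ((i : nat).+1)%:Z)).

Definition DOmat (R : realFieldType) (n : nat) (J : seq int) (c : int -> int -> R)
  (z : RatF R) : 'M[RatF R]_n :=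
  \sum_(j <- J) scal_mat n (c j) *m Tpow n z j.

Definition Lax (R : realFieldType) (n : nat) (Jm Jp : seq int) (c : int -> int -> R)
  (z : RatF R) : 'M[RatF R]_n :=
  invmx (DOmat n Jm c z) *m DOmat n Jp c z.

(* If [D'] and [D] correspond to the same polygon then [D' = a D b^-1], i.e.
   [c'_j(i) = a_i c_j(i) / b_(i+j)] (test [D'] on sequences supported at one
   point).  In matrix form, conjugating [T(z)] by a quasiperiodic scalar
   operator with monodromy [m] shifts its entries and rescales [z]:
   [T(z/m)^j diag(1/b) = diag(1/b_(.+j)) T(z)^j].  Hence
   [D'(z) = A D(z/m) B^-1] for both [D_-] and [D_+], with the same [A] and [B],
   so [A] cancels in [D'_-^-1 D'_+] and [L'(z) = B L(z/m) B^-1].  Invertibility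
   of [D_-(z/m)] follows from that of [D_-(z)] since [z |-> z/m] extends to a
   field automorphism of [R(z)]. *)

From HB Require Import structures.
From mathcomp Require Import all_boot all_order all_algebra.
From mathcomp Require Import zify.
Import Order.TTheory GRing.Theory Num.Theory.
Local Open Scope ring_scope.
Set Implicit Arguments. Unset Strict Implicit.

Local Notation tofrac := (@FracField.tofrac _).

Lemma frac_numden (R : idomainType) (x : {fraction R}) :
  x = tofrac (repr x).1 / tofrac (repr x).2.
Proof.
rewrite -[in LHS](reprK x); unlock FracField.tofrac => /=.
have -> : forall y : {fraction R}, y^-1 = FracField.inv y by [].
have -> : forall y z : {fraction R}, y * z = FracField.mul y z by [].
rewrite -FracField.pi_inv -FracField.pi_mul; apply/eqmodP.
rewrite /= FracField.equivfE /FracField.mulf /FracField.invf /=.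
by rewrite !numden_Ratio ?oner_neq0 ?mul1r ?mulr1 ?denom_ratioP // mulrC.
Qed.

Section FracLift.
Variables (R : idomainType) (F : fieldType) (f : {rmorphism R -> F}).
Hypothesis f_neq0 : forall x, x != 0 -> f x != 0.

(* Independent of the representative when [f] is injective, see [frac_liftE]. *)
Definition frac_lift (x : {fraction R}) : F := f (repr x).1 / f (repr x).2.

Lemma frac_liftE p q : q != 0 -> frac_lift (tofrac p / tofrac q) = f p / f q.
Proof.
move=> q_neq0; rewrite /frac_lift; set x := tofrac p / tofrac q.
have d_neq0 : (repr x).2 != 0 := denom_ratioP _.
have : x == x by []; rewrite {1}(frac_numden x) eqr_div ?tofrac_eq0 //.
rewrite -!tofracM tofrac_eq => /eqP pq.
by apply/eqP; rewrite eqr_div ?f_neq0 // -!rmorphM pq.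
Qed.

Lemma frac_lift_tofrac p : frac_lift (tofrac p) = f p.
Proof.
by rewrite -[tofrac p]divr1 -tofrac1 frac_liftE ?oner_neq0 // rmorph1 divr1.
Qed.

Lemma frac_lift_is_zmod_morphism : zmod_morphism frac_lift.
Proof.
move=> x y; rewrite (frac_numden x) (frac_numden y).
set p := (repr x).1; set q := (repr x).2; set p' := (repr y).1; set q' := (repr y).2.
have q_neq0 : q != 0 := denom_ratioP _; have q'_neq0 : q' != 0 := denom_ratioP _.
rewrite -mulNr -tofracN addf_div ?tofrac_eq0 // -!tofracM -tofracD.
rewrite !frac_liftE ?mulf_neq0 // -[in RHS]mulNr addf_div ?f_neq0 //.
by rewrite rmorphD !rmorphM rmorphN.
Qed.

Lemma frac_lift_is_monoid_morphism : monoid_morphism frac_lift.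
Proof.
split; first by rewrite -tofrac1 frac_lift_tofrac rmorph1.
move=> x y; rewrite (frac_numden x) (frac_numden y) mulf_div -!tofracM.
by rewrite !frac_liftE ?mulf_neq0 ?denom_ratioP // mulf_div !rmorphM.
Qed.

End FracLift.

Section Dilation.
Variables (R : realFieldType) (t : R).
Hypothesis t_neq0 : t != 0.

Lemma comp_dilate_neq0 (p : {poly R}) :
  p != 0 -> (tofrac \o comp_poly (t *: 'X)) p != 0.
Proof. by move=> p_neq0; rewrite tofrac_eq0 comp_poly2_eq0 // size_scale // size_polyX. Qed.

(* The substitution [z |-> t z] on rational functions; the unused proof argument
   only serves as the key of the ring morphism instance below. *)
Definition zdilate of t != 0 : RatF R -> RatF R :=
  frac_lift (tofrac \o comp_poly (t *: 'X)).

Lemma zdilate_cst c : zdilate t_neq0 (cstF c) = cstF c.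
Proof. by rewrite /zdilate /cstF (frac_lift_tofrac comp_dilate_neq0) /= comp_polyC. Qed.

Lemma zdilate_z : zdilate t_neq0 (zF R) = cstF t * zF R.
Proof.
by rewrite /zdilate /zF (frac_lift_tofrac comp_dilate_neq0) /= comp_polyX -mul_polyC tofracM.
Qed.

End Dilation.

HB.instance Definition _ (R : realFieldType) (t : R) (t_neq0 : t != 0) :=
  GRing.isZmodMorphism.Build _ _ (zdilate t_neq0)
    (frac_lift_is_zmod_morphism (comp_dilate_neq0 t_neq0)).
HB.instance Definition _ (R : realFieldType) (t : R) (t_neq0 : t != 0) :=
  GRing.isMonoidMorphism.Build _ _ (zdilate t_neq0)
    (frac_lift_is_monoid_morphism (comp_dilate_neq0 t_neq0)).

Section MapDOmat.
Variables (R : realFieldType) (n : nat) (phi : {rmorphism RatF R -> RatF R}).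
Hypothesis phi_cst : forall c, phi (cstF c) = cstF c.

Lemma map_Tmat z : map_mx phi (Tmat n z) = Tmat n (phi z).
Proof.
apply/matrixP => i j; rewrite !mxE.
by case: ifP => _; [rewrite rmorph1 | case: ifP => _; rewrite ?rmorph0].
Qed.

Lemma map_Tpow z j : map_mx phi (Tpow n z j) = Tpow n (phi z) j.
Proof.
have map_mxX (A : 'M_n) k : map_mx phi (A ^+ k) = map_mx phi A ^+ k.
  by elim: k => [|k IHk]; rewrite ?map_mx1 // !exprS map_mxM IHk.
by case: j => k; rewrite /Tpow map_mxX ?map_invmx map_Tmat.
Qed.

Lemma map_scal_mat a : map_mx phi (scal_mat n a) = scal_mat n a.
Proof.
by rewrite /scal_mat map_diag_mx; congr diag_mx; apply/rowP => i; rewrite !mxE phi_cst.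
Qed.

Lemma map_DOmat J c z : map_mx phi (DOmat n J c z) = DOmat n J c (phi z).
Proof.
rewrite /DOmat map_mx_sum; apply: eq_bigr => j _.
by rewrite map_mxM map_scal_mat map_Tpow.
Qed.

End MapDOmat.

Section MatrixInverse.
Variables (F : fieldType) (n : nat).

Lemma invmx_unique (A B : 'M[F]_n) : A *m B = 1%:M -> invmx A = B.
Proof.
move=> AB1; have [uA _] := mulmx1_unit AB1.
by rewrite -[invmx A]mulmx1 -AB1 mulmxA mulVmx // mul1mx.
Qed.

Lemma invmx_intertwine (X Y A B : 'M[F]_n) :
  X \in unitmx -> Y \in unitmx -> X *m A = B *m Y -> invmx X *m B = A *m invmx Y.
Proof.
move=> uX uY XA_BY.
by rewrite -[B](mulmxK uY) -XA_BY mulmxA mulKmx.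
Qed.

Lemma invmx_conj_mul (A X Y B : 'M[F]_n) :
  A \in unitmx -> X \in unitmx -> B \in unitmx ->
  invmx (A *m X *m invmx B) *m (A *m Y *m invmx B) = B *m (invmx X *m Y) *m invmx B.
Proof.
move=> uA uX uB.
rewrite (@invmx_unique _ (B *m invmx X *m invmx A)); last first.
  by rewrite !mulmxA mulmxKV // mulmxK // mulmxV.
by rewrite !mulmxA mulmxKV // mulmxA.
Qed.

End MatrixInverse.

Lemma quasiperiodic_shift (R : realFieldType) n (m : R) (f : int -> R) (s : int) :
  quasiperiodic n m f -> quasiperiodic n m (fun i => f (i + s)).
Proof. by move=> qf i; rewrite -qf addrAC. Qed.

Lemma quasiperiodic_inv (R : realFieldType) n (m : R) (f : int -> R) :
  quasiperiodic n m f -> quasiperiodic n m^-1 (fun i => (f i)^-1).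
Proof. by move=> qf i; rewrite qf invfM. Qed.

Lemma quasiperiodic_monodromy_neq0 (R : realFieldType) n (m : R) (f : int -> R) :
  scalar_invertible f -> quasiperiodic n m f -> m != 0.
Proof.
move=> f_neq0 qf; apply: contra (f_neq0 n%:Z) => /eqP m0.
by rewrite -[n%:Z]add0r qf m0 mul0r.
Qed.

Section ScalarOperators.
Variables (R : realFieldType) (n : nat).

Lemma eq_scal_mat (f g : int -> R) : f =1 g -> scal_mat n f = scal_mat n g.
Proof. by move=> fg; rewrite /scal_mat; congr diag_mx; apply/rowP => i; rewrite !mxE fg. Qed.

Lemma scal_matM (f g : int -> R) :
  scal_mat n f *m scal_mat n g = scal_mat n (fun i => f i * g i).
Proof.
by rewrite /scal_mat mul_diag_mx; apply/matrixP => i j; rewrite !mxE /cstF polyCM tofracM mulrnAr.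
Qed.

Lemma scal_mat_inv (f : int -> R) :
  scalar_invertible f -> scal_mat n f *m scal_mat n (fun i => (f i)^-1) = 1%:M.
Proof.
move=> f_neq0; rewrite scal_matM (@eq_scal_mat _ (fun=> 1)) => [|i]; last exact: divff.
by rewrite /scal_mat /cstF -diag_const_mx; congr diag_mx; apply/rowP => i; rewrite !mxE.
Qed.

Lemma scal_mat_unit (f : int -> R) : scalar_invertible f -> scal_mat n f \in unitmx.
Proof.
move=> f_neq0; have [uf _] := mulmx1_unit (scal_mat_inv f_neq0).
exact: uf.
Qed.

Lemma invmx_scal_mat (f : int -> R) :
  scalar_invertible f -> invmx (scal_mat n f) = scal_mat n (fun i => (f i)^-1).
Proof. move=> f_neq0; exact: invmx_unique (scal_mat_inv f_neq0). Qed.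

End ScalarOperators.

Section ShiftMatrix.
Variables (R : realFieldType) (n : nat).

Lemma Tmat_ordS (z : RatF R) (i j : 'I_n) :
  Tmat n z i j = if j == ordS i then (if (i : nat) == n.-1 then z else 1) else 0.
Proof.
have i_lt_n := ltn_ord i; have j_lt_n := ltn_ord j.
rewrite /Tmat mxE -val_eqE /=.
have [i_last|i_not_last] := eqVneq (i : nat) n.-1.
  rewrite i_last prednK ?modnn ?eqxx; last by lia.
  by rewrite ifF //; apply/eqP; lia.
by rewrite modn_small //; lia.
Qed.

(* [T(z)] is a weighted cyclic permutation matrix, with inverse [T(1/z)^T]. *)
Lemma Tmat_unit (z : RatF R) : z != 0 -> Tmat n z \in unitmx.
Proof.
move=> z_neq0.
suff /mulmx1_unit[uT _] : Tmat n z *m (Tmat n z^-1)^T = 1%:M by exact: uT.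
apply/matrixP => i l; rewrite [LHS]mxE [RHS]mxE (bigD1 (ordS i)) //= big1 => [|j j_neq].
  rewrite addr0 [_^T _ _]mxE !Tmat_ordS eqxx (inj_eq (@ordS_inj n)).
  have [<-|neq_il] := eqVneq i l; last by rewrite mulr0.
  by case: ifP => _; rewrite ?divff ?mulr1.
by rewrite Tmat_ordS (negPf j_neq) mul0r.
Qed.

Lemma Tmat_scal_mat (m : R) (z : RatF R) (f : int -> R) : quasiperiodic n m f ->
  Tmat n (cstF m * z) *m scal_mat n f = scal_mat n (fun i => f (i + 1)) *m Tmat n z.
Proof.
move=> qf; apply/matrixP => i j; rewrite mul_mx_diag mul_diag_mx !mxE.
case: eqP => [->|_]; first by rewrite mulr1 mul1r -[i.+2]addn1 PoszD.
case: andP => [[/eqP i_last /eqP ->]|_]; last by rewrite mulr0 mul0r.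
have n_gt0 : (0 < n)%N := leq_ltn_trans (leq0n _) (ltn_ord i).
have -> : i.+1%:Z + 1 = 1 + n%:Z by rewrite i_last prednK // addrC.
by rewrite qf /cstF polyCM tofracM mulrAC.
Qed.

End ShiftMatrix.

Section ShiftPowers.
Variables (R : realFieldType) (n : nat) (m : R).

Lemma exp_intertwine (X Y : 'M[RatF R]_n) (s : int) :
  (forall f, quasiperiodic n m f ->
     X *m scal_mat n f = scal_mat n (fun i => f (i + s)) *m Y) ->
  forall (k : nat) f, quasiperiodic n m f ->
    X ^+ k *m scal_mat n f = scal_mat n (fun i => f (i + s * k%:Z)) *m Y ^+ k.
Proof.
move=> XY; elim=> [|k IHk] f qf.
  by rewrite !expr0 mul1mx mulmx1; apply: eq_scal_mat => i; rewrite mulr0 addr0.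
rewrite !exprS -!mulmxE -mulmxA IHk // mulmxA XY; last exact: quasiperiodic_shift.
rewrite -mulmxA; congr (_ *m _); apply: eq_scal_mat => i.
by rewrite intS mulrDr mulr1 addrA addrAC.
Qed.

Lemma Tpow_scal_mat (z : RatF R) (j : int) (f : int -> R) :
  m != 0 -> z != 0 -> quasiperiodic n m f ->
  Tpow n (cstF m * z) j *m scal_mat n f = scal_mat n (fun i => f (i + j)) *m Tpow n z j.
Proof.
move=> m_neq0 z_neq0 qf; case: j => k; rewrite /Tpow.
  have := exp_intertwine (fun g (qg : quasiperiodic n m g) => Tmat_scal_mat z qg) k qf.
  by rewrite mul1r.
have mz_neq0 : cstF m * z != 0 by rewrite mulf_eq0 negb_or /cstF tofrac_eq0 polyC_eq0 m_neq0.
have XY g : quasiperiodic n m g -> invmx (Tmat n (cstF m * z)) *m scal_mat n g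
    = scal_mat n (fun i => g (i + -1)) *m invmx (Tmat n z).
  move=> qg; apply: invmx_intertwine; [exact: (Tmat_unit n mz_neq0) | exact: (Tmat_unit n z_neq0) |].
  rewrite Tmat_scal_mat; last exact: quasiperiodic_shift.
  by congr (_ *m _); apply: eq_scal_mat => i; rewrite addrK.
have := exp_intertwine XY k.+1 qf.
by rewrite NegzE mulN1r.
Qed.

End ShiftPowers.

Lemma DOmat_gauge (R : realFieldType) n (m : R) (z : RatF R) (a b : int -> R)
    (c c' : int -> int -> R) (J : seq int) :
  m != 0 -> z != 0 -> quasiperiodic n m b ->
  {in J, forall j i, c' j i = a i * c j i / b (i + j)} ->
  DOmat n J c' z
  = scal_mat n a *m DOmat n J c (cstF m^-1 * z) *m scal_mat n (fun i => (b i)^-1).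
Proof.
move=> m_neq0 z_neq0 qb c'E; rewrite /DOmat mulmx_sumr mulmx_suml.
apply: eq_big_seq => j Jj.
rewrite -!mulmxA (Tpow_scal_mat j (invr_neq0 m_neq0) z_neq0 (quasiperiodic_inv qb)).
rewrite !mulmxA !scal_matM; congr (_ *m _).
by apply: eq_scal_mat => i; rewrite c'E.
Qed.

Lemma DOact_gauge_coef (R : realFieldType) (J : seq int) (c c' : int -> int -> R) (a b : int -> R) :
  uniq J -> scalar_invertible b ->
  (forall V i, DOact J c' V i = a i * DOact J c (fun l => V l / b l) i) ->
  {in J, forall j i, c' j i = a i * c j i / b (i + j)}.
Proof.
move=> J_uniq b_neq0 c'E j Jj i.
pose V l := if l == i + j then b l else 0.
have Vj_only (d : int -> int -> R) (W : int -> R) :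
  (forall l, l != i + j -> W l = 0) -> DOact J d W i = d j i * W (i + j).
  move=> W0; rewrite /DOact (bigD1_seq j Jj J_uniq) /= big1 ?addr0 // => j' j'_neq.
  by rewrite W0 ?mulr0 // (inj_eq (@addrI _ i)).
have := c'E V i; rewrite !Vj_only => [|l|l]; last 2 first.
- by rewrite /V => /negPf ->; rewrite mul0r.
- by rewrite /V => /negPf ->.
by rewrite /V eqxx divff // mulr1 => <-; rewrite mulfK.
Qed.

Lemma arith_prog_uniq (s k : int) (l : nat) : k != 0 -> uniq (arith_prog s k l).
Proof.
move=> k_neq0; rewrite /arith_prog map_inj_uniq ?iota_uniq // => x y /addrI /(mulfI k_neq0).
by case.
Qed.

Lemma zF_neq0 (R : realFieldType) : zF R != 0.
Proof. by rewrite /zF tofrac_eq0 polyX_eq0. Qed.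

Theorem mainTheorem7 (R : realFieldType) (n : nat) (hn : (0 < n)%N)
  (sm sp k : int) (lm lp : nat) (hk : 0 < k)
  (hdisj : all (fun j => j \notin arith_prog sp k lp) (arith_prog sm k lm))
  (c c' : int -> int -> R)
  (hc : DO_coeffs n c) (hc' : DO_coeffs n c')
  (a b : int -> R) (m : R)
  (ha : scalar_invertible a) (hb : scalar_invertible b)
  (haq : quasiperiodic n m a) (hbq : quasiperiodic n m b)
  (hD' : forall (V : int -> R) (i : int),
     DOact (arith_prog sm k lm ++ arith_prog sp k lp) c' V i
     = a i * DOact (arith_prog sm k lm ++ arith_prog sp k lp) c (fun l => V l / b l) i)
  (hgen : DOmat n (arith_prog sm k lm) c (zF R) \in unitmx) :
  DOmat n (arith_prog sm k lm) c' (zF R) \in unitmx /\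
  exists (d : 'rV[R]_n) (t : R),
    (forall i, d 0 i != 0) /\ t != 0 /\
    Lax n (arith_prog sm k lm) (arith_prog sp k lp) c' (zF R)
    = diag_mx (map_mx (@cstF R) d)
        *m Lax n (arith_prog sm k lm) (arith_prog sp k lp) c (cstF t * zF R)
        *m invmx (diag_mx (map_mx (@cstF R) d)).
Proof.
set Jm := arith_prog sm k lm; set Jp := arith_prog sp k lp.
have m_neq0 := quasiperiodic_monodromy_neq0 ha haq.
have m'_neq0 := invr_neq0 m_neq0.
have J_uniq : uniq (Jm ++ Jp).
  rewrite cat_uniq !arith_prog_uniq ?gt_eqF //= andbT.
  by apply/hasPn => j; apply: contraL => /(allP hdisj).
have gauge J : {subset J <= Jm ++ Jp} -> DOmat n J c' (zF R)
    = scal_mat n a *m DOmat n J c (cstF m^-1 * zF R) *m invmx (scal_mat n b).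
  move=> sub_J; rewrite invmx_scal_mat //; apply: DOmat_gauge (zF_neq0 R) hbq _ => //.
  by move=> j /sub_J /(DOact_gauge_coef J_uniq hb hD').
have uDm : DOmat n Jm c (cstF m^-1 * zF R) \in unitmx.
  rewrite -(zdilate_z m'_neq0) -map_DOmat => [|x]; last exact: zdilate_cst.
  by rewrite map_unitmx.
split.
  rewrite gauge; last by move=> j Jj; rewrite mem_cat Jj.
  by rewrite !unitmx_mul uDm (scal_mat_unit n ha) unitmx_inv (scal_mat_unit n hb).
exists (\row_(i < n) b (i.+1)%:Z), m^-1; split => [i|]; first by rewrite mxE.
split; first exact: m'_neq0.
have -> : diag_mx (map_mx (@cstF R) (\row_(i < n) b (i.+1)%:Z)) = scal_mat n b.
  by congr diag_mx; apply/rowP => i; rewrite !mxE.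
rewrite /Lax !gauge; first exact: invmx_conj_mul (scal_mat_unit n ha) uDm (scal_mat_unit n hb).
  by move=> j Jj; rewrite mem_cat Jj orbT.
by move=> j Jj; rewrite mem_cat Jj.
Qed.
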